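(* For every integer $m\ge0$ and all $x,u\in O$: (1) $D_{q^m-1}(x+u)=\sum_{e+f=q^m-1}(-1)^eD_e(x)D_f(u)$; (2) $D_{q^m-1}(x-u)=\sum_{e+f=q^m-1}D_e(x)D_f(u)$; (3) $D'_{q^m-1}(x+u)=\sum_{e+f=q^m-1}(-1)^eD_e(x)D'_f(u)$; (4) $D'_{q^m-1}(x-u)=\sum_{e+f=q^m-1}D_e(x)D'_f(u)$, where the sums run over pairs of nonnegative integers $(e,f)$.
   Context: Let $q$ be a prime power, $O=\mathbf{F}_q[[T]]$. Hasse derivatives: $\mathcal{D}_n(\sum_ia_iT^i)=\sum_i\binom{i}{n}a_iT^{i-n}$ (binomials in $\mathbf{F}_q$). For $j\ge0$ with base-$q$ expansion $j=\alpha_0+\alpha_1q+\cdots+\alpha_sq^s$ ($0\le\alpha_i<q$): $D_j(x)=\prod_{n=0}^s\mathcal{D}_n(x)^{\alpha_n}$ ($D_0=1$), and $D'_j(x)=\prod_{n=0}^sD'_{\alpha_nq^n}(x)$ where $D'_{\alpha q^n}(x)=\mathcal{D}_n(x)^\alpha$ if $0\le\alpha<q-1$ and $D'_{(q-1)q^n}(x)=\mathcal{D}_n(x)^{q-1}-1$. *)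

(* O = F_q[[T]] is modelled as coefficient sequences nat -> F
   where F is a finite field and q := #|F|. *)
From HB Require Import structures.
From mathcomp Require Import all_boot all_order all_algebra.
Set Implicit Arguments. Unset Strict Implicit. Unset Printing Implicit Defensive.
Import GRing.Theory.
Local Open Scope ring_scope.

Section PowerSeries.
Variable F : finFieldType.

Definition pseries := nat -> F.

Definition ps_const (c : F) : pseries := fun i => if i == 0%N then c else 0.
Definition ps_one : pseries := ps_const 1.
Definition ps_add (a b : pseries) : pseries := fun i => a i + b i.
Definition ps_opp (a : pseries) : pseries := fun i => - a i.
Definition ps_sub (a b : pseries) : pseries := fun i => a i - b i.
Definition ps_scale (c : F) (a : pseries) : pseries := fun i => c * a i.
Definition ps_mul (a b : pseries) : pseries :=
  fun k => \sum_(i < k.+1) a i * b (k - i)%N.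
Fixpoint ps_exp (a : pseries) (n : nat) : pseries :=
  match n with 0%N => ps_one | n'.+1 => ps_mul a (ps_exp a n') end.
Definition ps_sum (s : seq pseries) : pseries := foldr ps_add (fun _ => 0) s.
Definition ps_prod (s : seq pseries) : pseries := foldr ps_mul ps_one s.

Definition q : nat := #|F|.

(* Hasse derivative: D_n (sum_i a_i T^i) = sum_i binom(i,n) a_i T^(i-n);
   coefficient of T^k is binom(k+n,n) a_(k+n) (binomial taken in F). *)
Definition hasse (n : nat) (x : pseries) : pseries :=
  fun k => ('C(k + n, n))%:R * x (k + n)%N.

Definition digit (j n : nat) : nat := ((j %/ q ^ n) %% q)%N.

(* D_j(x) = prod_n (hasse n x)^(alpha_n); digits of index >= j are 0, so
   taking n < j.+1 covers the whole base-q expansion (D_0 = 1). *)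
Definition Dj (j : nat) (x : pseries) : pseries :=
  ps_prod [seq ps_exp (hasse n x) (digit j n) | n <- iota 0 j.+1].

Definition Dprime_digit (alpha n : nat) (x : pseries) : pseries :=
  if alpha == q.-1 then ps_sub (ps_exp (hasse n x) q.-1) ps_one
  else ps_exp (hasse n x) alpha.

Definition Dpj (j : nat) (x : pseries) : pseries :=
  ps_prod [seq Dprime_digit (digit j n) n x | n <- iota 0 j.+1].

End PowerSeries.

From mathcomp Require Import all_boot all_order all_algebra.
From mathcomp Require Import zify ring.
From mathcomp Require abelian finfield.
From Stdlib Require Import FunctionalExtensionality.
Set Implicit Arguments. Unset Strict Implicit. Unset Printing Implicit Defensive.
Import GRing.Theory.
Local Open Scope ring_scope.

(* Every base-q digit of N = q^m - 1 is q - 1, so D_N(x +- u) is the product over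
   n < m of (D_n x +- D_n u)^(q-1), and D'_N(x +- u) the product of the same
   powers minus 1.  Over F_q one has C(q-1, d) = (-1)^d for d < q, hence
   (a + b)^(q-1) = sum_(d<q) (-1)^d a^d b^(q-1-d) and (a - b)^(q-1) is the same
   sum without signs.  Multiplying out the m factors, a choice of exponents d_n
   for the D_n x is the digit expansion of some e < q^m, the complementary
   exponents q-1-d_n are the digits of N - e, and the sign is (-1)^e because
   (-1)^q = -1.  This computation is done in an arbitrary commutative ring and
   transported to F_q[[T]] coefficientwise: the coefficient of T^k of each
   series involved only depends on truncations at degree k, which are
   polynomials. *)

Lemma predM_subD (b c e d : nat) : (e < c)%N -> (d < b)%N ->
  ((c * b).-1 - (e * b + d) = (c.-1 - e) * b + (b.-1 - d))%N.
Proof.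
move=> lt_ec lt_db; have : (e.+1 * b <= c * b)%N by rewrite leq_mul2r lt_ec orbT.
nia.
Qed.

Lemma big_nat_mul_split (V : nmodType) (b c : nat) (f : nat -> V) :
  \sum_(0 <= e < c * b) f e = \sum_(0 <= e < c) \sum_(0 <= d < b) f (e * b + d)%N.
Proof.
rewrite big_nat_mul; apply: eq_bigr => e _.
rewrite -{1}[(e * b)%N]add0n big_addn mulSn addnK.
by apply: eq_bigr => d _; rewrite addnC.
Qed.

Definition pow_digit {R : comNzRingType} (a : nat) (x : R) : R := x ^+ a.

Section DigitProducts.
Variables (R : comNzRingType) (b : nat).
Hypothesis b_gt1 : (1 < b)%N.

Let b_gt0 : (0 < b)%N. Proof. exact: ltnW. Qed.

Implicit Types (G : nat -> R -> R) (A B C : nat -> R).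

Definition base_digit (j n : nat) : nat := ((j %/ b ^ n) %% b)%N.

Definition digit_prod_upto (m : nat) (G : nat -> R -> R) (A : nat -> R) (j : nat) : R :=
  \prod_(n < m) G (base_digit j n) (A n).

Definition digit_prod (G : nat -> R -> R) (A : nat -> R) (j : nat) : R :=
  \prod_(n <- iota 0 j.+1) G (base_digit j n) (A n).

Lemma digit_prod_uptoS m G A e d : (d < b)%N ->
  digit_prod_upto m.+1 G A (e * b + d) =
  G d (A 0%N) * digit_prod_upto m G (fun n => A n.+1) e.
Proof.
move=> lt_db; rewrite /digit_prod_upto big_ord_recl /base_digit expn0 divn1.
rewrite modnMDl modn_small //; congr (_ * _); apply: eq_bigr => n _.
by rewrite lift0 expnS divnMA divnMDl // (divn_small lt_db) addn0.
Qed.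

Lemma digit_prod_upto_pred_exp m G A :
  digit_prod_upto m G A (b ^ m).-1 = \prod_(n < m) G b.-1 (A n).
Proof.
elim: m A => [|m IH] A; first by rewrite /digit_prod_upto !big_ord0.
have -> : (b ^ m.+1).-1 = ((b ^ m).-1 * b + b.-1)%N.
  by rewrite expnSr; have := expn_gt0 b m; rewrite b_gt0 /=; nia.
by rewrite digit_prod_uptoS ?prednK // IH big_ord_recl.
Qed.

Lemma prod_digit_sum (s : R) m G (A B : nat -> R) : s ^+ b = s ->
  \prod_(n < m) \sum_(0 <= d < b) s ^+ d * A n ^+ d * G (b.-1 - d)%N (B n) =
  \sum_(0 <= e < b ^ m) s ^+ e *
    (digit_prod_upto m pow_digit A e * digit_prod_upto m G B ((b ^ m).-1 - e)).
Proof.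
move=> s_exp; elim: m A B => [|m IH] A B.
  by rewrite big_ord0 expn0 big_nat1 /digit_prod_upto !big_ord0 !mulr1.
rewrite big_ord_recl (IH (fun n => A n.+1) (fun n => B n.+1)) expnSr big_nat_mul_split.
rewrite mulr_suml; under eq_bigr do rewrite mulr_sumr.
rewrite exchange_big; apply: eq_big_nat => e /andP[_ lt_e].
apply: eq_big_nat => d /andP[_ lt_d].
have lt_Nd : (b.-1 - d < b)%N by lia.
rewrite predM_subD // !digit_prod_uptoS // /pow_digit exprD mulnC exprM s_exp.
ring.
Qed.

Lemma base_digit_small j n : (j < b ^ n)%N -> base_digit j n = 0%N.
Proof. by move=> lt_j; rewrite /base_digit (divn_small lt_j) mod0n. Qed.

Lemma prod_base_digit_widen G A j L M : G 0%N =1 (fun=> 1) ->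
  (j < b ^ L)%N -> (L <= M)%N ->
  \prod_(0 <= n < M) G (base_digit j n) (A n) =
  \prod_(0 <= n < L) G (base_digit j n) (A n).
Proof.
move=> G0 lt_j le_LM; rewrite (big_cat_nat (leq0n L) le_LM) /=.
rewrite [X in _ * X]big1_seq ?mulr1 // => n /andP[_]; rewrite mem_index_iota.
by case/andP=> le_Ln _; rewrite base_digit_small ?G0 // (leq_trans lt_j) // leq_pexp2l.
Qed.

Lemma digit_prodE m G A j : G 0%N =1 (fun=> 1) -> (j < b ^ m)%N ->
  digit_prod G A j = digit_prod_upto m G A j.
Proof.
move=> G0 lt_j; rewrite /digit_prod /digit_prod_upto -[iota 0 j.+1]/(index_iota 0 j.+1).
rewrite -(big_mkord xpredT (fun n => G (base_digit j n) (A n))).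
have lt_jS : (j < b ^ j.+1)%N by rewrite ltnW // ltn_expl.
rewrite -(prod_base_digit_widen A G0 lt_jS (leq_addr m j.+1)).
by rewrite (prod_base_digit_widen A G0 lt_j (leq_addl _ _)).
Qed.

Lemma digit_prod_pred_exp (s : R) m G (A B C : nat -> R) :
  s ^+ b = s -> G 0%N =1 (fun=> 1) ->
  (forall n, G b.-1 (C n) =
     \sum_(0 <= d < b) s ^+ d * A n ^+ d * G (b.-1 - d)%N (B n)) ->
  let N := (b ^ m).-1 in
  digit_prod G C N =
  \sum_(e <- iota 0 N.+1) s ^+ e * (digit_prod pow_digit A e * digit_prod G B (N - e)).
Proof.
move=> s_exp G0 expand_C N.
have NS : N.+1 = (b ^ m)%N by rewrite prednK ?expn_gt0 ?b_gt0.
rewrite (digit_prodE (m := m)) ?NS // digit_prod_upto_pred_exp.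
under eq_bigr do rewrite expand_C.
rewrite (prod_digit_sum _ _ A B) // /index_iota subn0.
apply: eq_big_seq => e; rewrite mem_iota => /andP[_ lt_e].
by rewrite !(digit_prodE (m := m)) // -NS ltnS leq_subr.
Qed.
End DigitProducts.

Section DigitExpansions.
Variables (R : comNzRingType) (b : nat).
Hypothesis b_gt1 : (1 < b)%N.

Let b_gt0 : (0 < b)%N. Proof. exact: ltnW. Qed.

Definition dprime_digit (a : nat) (x : R) : R :=
  if a == b.-1 then x ^+ b.-1 - 1 else x ^+ a.

Lemma dprime_digit0 : dprime_digit 0 =1 (fun=> 1).
Proof. by move=> x; rewrite /dprime_digit ifF ?expr0 //; apply/eqP; lia. Qed.

Lemma sum_dprime_digit (s x y : R) :
  \sum_(0 <= d < b) s ^+ d * x ^+ d * pow_digit (b.-1 - d) y - 1 =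
  \sum_(0 <= d < b) s ^+ d * x ^+ d * dprime_digit (b.-1 - d) y.
Proof.
rewrite !(big_ltn b_gt0) /= subn0 /dprime_digit /pow_digit eqxx !expr0 !mul1r addrAC.
congr (_ + _); apply: eq_big_nat => d /andP[lt0d lt_db].
by rewrite ifF //; apply/eqP; lia.
Qed.

Variables (s : R) (op : R -> R -> R).
Hypothesis s_exp : s ^+ b = s.
Hypothesis expand_op : forall x y,
  op x y ^+ b.-1 = \sum_(0 <= d < b) s ^+ d * x ^+ d * y ^+ (b.-1 - d).

Lemma digit_prod_pow_op m (A B : nat -> R) :
  let N := (b ^ m).-1 in
  digit_prod b pow_digit (fun n => op (A n) (B n)) N =
  \sum_(e <- iota 0 N.+1) s ^+ e *
    (digit_prod b pow_digit A e * digit_prod b pow_digit B (N - e)).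
Proof. by apply: digit_prod_pred_exp => // n; apply: expand_op. Qed.

Lemma digit_prod_dprime_op m (A B : nat -> R) :
  let N := (b ^ m).-1 in
  digit_prod b dprime_digit (fun n => op (A n) (B n)) N =
  \sum_(e <- iota 0 N.+1) s ^+ e *
    (digit_prod b pow_digit A e * digit_prod b dprime_digit B (N - e)).
Proof.
apply: digit_prod_pred_exp => // [|n]; first exact: dprime_digit0.
by rewrite -sum_dprime_digit /dprime_digit eqxx expand_op.
Qed.
End DigitExpansions.

Section BinomialSign.
Variables (R : comNzRingType) (b : nat).
Hypothesis b_gt1 : (1 < b)%N.
Hypothesis binom_sign : forall d, (d < b)%N -> 'C(b.-1, d)%:R = (-1) ^+ d :> R.

Let b_gt0 : (0 < b)%N. Proof. exact: ltnW. Qed.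

Lemma sign_pred_exp : (-1) ^+ b.-1 = 1 :> R.
Proof. by rewrite -binom_sign ?binn // ltn_predL. Qed.

Lemma sign_exp : (-1) ^+ b = -1 :> R.
Proof. by rewrite -(prednK b_gt0) exprS sign_pred_exp mulr1. Qed.

Lemma exprD_pred (x y : R) :
  (x + y) ^+ b.-1 = \sum_(0 <= d < b) (-1) ^+ d * x ^+ d * y ^+ (b.-1 - d).
Proof.
rewrite addrC exprDn prednK // big_mkord; apply: eq_bigr => d _.
by rewrite -mulr_natr binom_sign //; ring.
Qed.

(* The factor [1 ^+ d] puts the expansion in the shape of [expand_op] with [s = 1]. *)
Lemma exprB_pred (x y : R) :
  (x - y) ^+ b.-1 = \sum_(0 <= d < b) 1 ^+ d * x ^+ d * y ^+ (b.-1 - d).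
Proof.
rewrite exprD_pred; apply: eq_big_nat => d /andP[_ lt_db].
have sign_sum : (-1) ^+ d * (-1) ^+ (b.-1 - d) = 1 :> R.
  by rewrite -exprD subnKC ?sign_pred_exp //; lia.
rewrite (exprNn y) expr1n mul1r.
by transitivity ((-1) ^+ d * (-1) ^+ (b.-1 - d) * x ^+ d * y ^+ (b.-1 - d));
  [ring | rewrite sign_sum mul1r].
Qed.
End BinomialSign.

Lemma pchar_nat_card (F : finFieldType) : [pchar F].-nat #|F|.
Proof.
have [p _ pcharFp] := finfield.finPcharP F.
rewrite (eq_pnat _ (pcharf_eq pcharFp)) -cardsT.
exact: abelian.abelem_pgroup (abelian.fin_ring_pchar_abelem pcharFp).
Qed.

Lemma binom_card_eq0 (F : finFieldType) d :
  (0 < d < #|F|)%N -> 'C(#|F|, d)%:R = 0 :> F.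
Proof.
case/andP=> d_gt0 lt_dF.
have frob : ('X + 1) ^+ #|F| = 'X ^+ #|F| + 1 :> {poly F}.
  by rewrite exprDn_pchar ?expr1n // (eq_pnat _ (@pchar_poly F)) pchar_nat_card.
have := congr1 (fun p : {poly F} => p`_d) frob.
rewrite exprD1n coef_sum coefD coefXn coef1 (ltn_eqF lt_dF) (gtn_eqF d_gt0) addr0.
rewrite (bigD1 (inord d)) //= big1 => [|i /negbTE ne_id]; last first.
  rewrite coefMn coefXn (_ : (d == i) = false) ?mul0rn //.
  by apply: contraFF ne_id => /eqP ->; rewrite inord_val.
by rewrite coefMn coefXn inordK ?ltnS 1?ltnW // eqxx addr0.
Qed.

Lemma binom_pred_card (F : finFieldType) d :
  (d < #|F|)%N -> 'C(#|F|.-1, d)%:R = (-1) ^+ d :> F.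
Proof.
have F_gt0 : (0 < #|F|)%N by apply: ltnW; apply: finfield.finNzRing_gt1.
elim: d => [|d IH] lt_dF; first by rewrite bin0.
have /eqP := binom_card_eq0 (d := d.+1) lt_dF.
rewrite -{1}(prednK F_gt0) binS natrD IH 1?ltnW // addr_eq0 => /eqP ->.
by rewrite exprS mulN1r.
Qed.

Section Truncation.
Variables (F : finFieldType) (k : nat).
Implicit Types (a c : pseries F) (P Q : {poly F}).

Definition agree_upto a P := forall j, (j <= k)%N -> a j = P`_j.

Definition ps_trunc a : {poly F} := \poly_(j < k.+1) a j.

Lemma agree_ps_trunc a : agree_upto a (ps_trunc a).
Proof. by move=> j le_jk; rewrite coef_poly ltnS le_jk. Qed.

Lemma agree_add a c P Q :
  agree_upto a P -> agree_upto c Q -> agree_upto (ps_add a c) (P + Q).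
Proof. by move=> aP cQ j le_jk; rewrite /ps_add coefD aP ?cQ. Qed.

Lemma agree_sub a c P Q :
  agree_upto a P -> agree_upto c Q -> agree_upto (ps_sub a c) (P - Q).
Proof. by move=> aP cQ j le_jk; rewrite /ps_sub coefB aP ?cQ. Qed.

Lemma agree_scale_sign e a P :
  agree_upto a P -> agree_upto (ps_scale ((-1) ^+ e) a) ((-1) ^+ e * P).
Proof.
by move=> aP j le_jk; rewrite /ps_scale -(rmorphN1 (@polyC F)) -rmorphXn coefCM aP.
Qed.

Lemma agree_one : agree_upto (ps_one F) 1.
Proof. by move=> j _; rewrite /ps_one /ps_const coef1; case: (j == 0%N). Qed.

Lemma agree_mul a c P Q :
  agree_upto a P -> agree_upto c Q -> agree_upto (ps_mul a c) (P * Q).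
Proof.
move=> aP cQ j le_jk; rewrite /ps_mul coefM; apply: eq_bigr => i _.
rewrite aP ?cQ //; first exact: leq_trans (leq_subr _ _) le_jk.
by apply: leq_trans le_jk; rewrite -ltnS.
Qed.

Lemma agree_exp a P n : agree_upto a P -> agree_upto (ps_exp a n) (P ^+ n).
Proof.
move=> aP; elim: n => [|n IH]; first exact: agree_one.
by rewrite exprS; apply: agree_mul.
Qed.

Lemma agree_prod (f : nat -> pseries F) (g : nat -> {poly F}) s :
  (forall n, agree_upto (f n) (g n)) ->
  agree_upto (ps_prod [seq f n | n <- s]) (\prod_(n <- s) g n).
Proof.
move=> fg; elim: s => [|n s IH]; first by rewrite big_nil; apply: agree_one.
by rewrite big_cons; apply: agree_mul.
Qed.

Lemma agree_sum (f : nat -> pseries F) (g : nat -> {poly F}) s :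
  (forall n, agree_upto (f n) (g n)) ->
  agree_upto (ps_sum [seq f n | n <- s]) (\sum_(n <- s) g n).
Proof.
move=> fg; elim: s => [|n s IH]; first by rewrite big_nil => j _; rewrite coef0.
by rewrite big_cons; apply: agree_add.
Qed.

Definition trunc_hasse (y : pseries F) (n : nat) : {poly F} := ps_trunc (hasse n y).

(* [digit F j n] and [base_digit (q F) j n] are convertible. *)
Lemma agree_Dj j y :
  agree_upto (Dj j y) (digit_prod (q F) pow_digit (trunc_hasse y) j).
Proof. by apply: agree_prod => n; apply/agree_exp/agree_ps_trunc. Qed.

Lemma agree_Dpj j y :
  agree_upto (Dpj j y) (digit_prod (q F) (dprime_digit (q F)) (trunc_hasse y) j).
Proof.
apply: agree_prod => n; rewrite /Dprime_digit /dprime_digit.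
case: ifP => _; last exact/agree_exp/agree_ps_trunc.
by apply: agree_sub; [apply/agree_exp/agree_ps_trunc | apply: agree_one].
Qed.

Lemma trunc_hasse_add x u :
  trunc_hasse (ps_add x u) = (fun n => trunc_hasse x n + trunc_hasse u n).
Proof.
apply: functional_extensionality => n; apply/polyP => j.
by rewrite coefD !coef_poly; case: ifP => _; rewrite ?addr0 // /hasse /ps_add mulrDr.
Qed.

Lemma trunc_hasse_sub x u :
  trunc_hasse (ps_sub x u) = (fun n => trunc_hasse x n - trunc_hasse u n).
Proof.
apply: functional_extensionality => n; apply/polyP => j.
by rewrite coefB !coef_poly; case: ifP => _; rewrite ?subr0 // /hasse /ps_sub mulrBr.
Qed.
End Truncation.

Lemma ps_eq_agree (F : finFieldType) (a c : pseries F) (P : nat -> {poly F}) :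
  (forall k, agree_upto k a (P k)) -> (forall k, agree_upto k c (P k)) -> a = c.
Proof.
by move=> aP cP; apply: functional_extensionality => k; rewrite (aP k) ?(cP k).
Qed.

Theorem corollary8 (F : finFieldType) (m : nat) (x u : pseries F) :
  let N := ((q F) ^ m).-1 in
  [/\ Dj N (ps_add x u) =
        ps_sum [seq ps_scale ((-1) ^+ e) (ps_mul (Dj e x) (Dj (N - e) u))
               | e <- iota 0 N.+1],
      Dj N (ps_sub x u) =
        ps_sum [seq ps_mul (Dj e x) (Dj (N - e) u) | e <- iota 0 N.+1],
      Dpj N (ps_add x u) =
        ps_sum [seq ps_scale ((-1) ^+ e) (ps_mul (Dj e x) (Dpj (N - e) u))
               | e <- iota 0 N.+1]
    & Dpj N (ps_sub x u) =
        ps_sum [seq ps_mul (Dj e x) (Dpj (N - e) u) | e <- iota 0 N.+1]].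
Proof.
move=> N; have q_gt1 : (1 < q F)%N := finfield.finNzRing_gt1 F.
have binom_sign d : (d < q F)%N -> 'C((q F).-1, d)%:R = (-1) ^+ d :> {poly F}.
  by move=> lt_dq; rewrite -(rmorph_nat (@polyC F)) binom_pred_card // rmorphXn rmorphN1.
have sign_q := sign_exp q_gt1 binom_sign.
have one_q : 1 ^+ q F = 1 :> {poly F} := expr1n _ _.
have expandD := exprD_pred q_gt1 binom_sign.
have expandB := exprB_pred q_gt1 binom_sign.
split.
- apply: (ps_eq_agree (fun k => agree_Dj (k := k) N (ps_add x u))) => k.
  rewrite trunc_hasse_add (digit_prod_pow_op q_gt1 sign_q expandD).
  by apply: agree_sum => e; apply/agree_scale_sign/agree_mul; apply: agree_Dj.
- apply: (ps_eq_agree (fun k => agree_Dj (k := k) N (ps_sub x u))) => k.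
  rewrite trunc_hasse_sub (digit_prod_pow_op q_gt1 one_q expandB).
  under eq_bigr do rewrite expr1n mul1r.
  by apply: agree_sum => e; apply/agree_mul; apply: agree_Dj.
- apply: (ps_eq_agree (fun k => agree_Dpj (k := k) N (ps_add x u))) => k.
  rewrite trunc_hasse_add (digit_prod_dprime_op q_gt1 sign_q expandD).
  by apply: agree_sum => e; apply/agree_scale_sign/agree_mul;
    [apply: agree_Dj | apply: agree_Dpj].
- apply: (ps_eq_agree (fun k => agree_Dpj (k := k) N (ps_sub x u))) => k.
  rewrite trunc_hasse_sub (digit_prod_dprime_op q_gt1 one_q expandB).
  under eq_bigr do rewrite expr1n mul1r.
  by apply: agree_sum => e; apply/agree_mul; [apply: agree_Dj | apply: agree_Dpj].
Qed.
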